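(* Let $w\in\mathfrak{S}_n$ with $\{k,k+1\}\subseteq\textsf{supp}(w)$. (a) Some reduced word for $w$ has the form (a word in letters $\le k$) followed by (a word in letters $\ge k+1$) if and only if there exists $x<k+1$ such that $\{w(1),\dots,w(k)\}=[1,k+1]\setminus\{x\}$ and $w^{-1}(x)>k+1$. (b) Some reduced word for $w$ has the form (a word in letters $\ge k+1$) followed by (a word in letters $\le k$) if and only if there exists $y>k+1$ such that $\{w(k+2),\dots,w(n)\}=[k+1,n]\setminus\{y\}$ and $w^{-1}(y)<k+1$. (c) The letters $k$ and $k+1$ are interlaced in $w$ if and only if there exist $i\in[1,k]$ and $j\in[k+2,n]$ such that $w(i)>k+1$ and $w(j)<k+1$.
   Context: Permutations are written in one-line notation and composed right to left; $\sigma_i=(i,i+1)$, and reduced words are sequences of subscripts of reduced expressions. $\textsf{supp}(w)$ is the set of letters appearing in reduced words of $w$. For $k,k+1\in\textsf{supp}(w)$: they have increasing orientation in $w$ if in every reduced word all occurrences of $k$ are to the left of all occurrences of $k+1$; decreasing orientation if all occurrences of $k$ are to the right of all occurrences of $k+1$; otherwise they are interlaced. *)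

From mathcomp Require Import all_boot all_fingroup.
Set Implicit Arguments. Unset Strict Implicit. Unset Printing Implicit Defensive.

(* Permutations of [1,n] are modelled as {perm 'I_n}: the ordinal i : 'I_n
   stands for the integer i+1.  Letters (subscripts) are 1-indexed nats:
   letter a (0 < a < n) is sigma_a = (a, a+1), i.e. the transposition of the
   ordinals a-1 and a. *)
Definition sigma (n a : nat) : {perm 'I_n} :=
  match (insub a.-1 : option 'I_n), (insub a : option 'I_n) with
  | Some i, Some j => tperm i j
  | _, _ => 1%g
  end.

Definition valid_word (n : nat) (s : seq nat) : bool := all (fun a => 0 < a < n) s.

(* The product sigma_{a_1} o sigma_{a_2} o ... o sigma_{a_m} (composition right
   to left, as functions).  In mathcomp (p * q) x = q (p x), hence the order. *)
Definition word_perm (n : nat) (s : seq nat) : {perm 'I_n} :=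
  foldr (fun a p => (p * sigma n a)%g) 1%g s.

Definition reduced_word (n : nat) (w : {perm 'I_n}) (s : seq nat) : Prop :=
  [/\ valid_word n s, word_perm n s = w &
      forall t, valid_word n t -> word_perm n t = w -> size s <= size t].

Definition in_supp (n : nat) (w : {perm 'I_n}) (a : nat) : Prop :=
  exists s, reduced_word w s /\ a \in s.

Definition incr_orient (n : nat) (w : {perm 'I_n}) (k : nat) : Prop :=
  forall s, reduced_word w s ->
    forall i j, i < size s -> j < size s ->
      nth 0 s i = k -> nth 0 s j = k.+1 -> i < j.

Definition decr_orient (n : nat) (w : {perm 'I_n}) (k : nat) : Prop :=
  forall s, reduced_word w s ->
    forall i j, i < size s -> j < size s ->
      nth 0 s i = k -> nth 0 s j = k.+1 -> j < i.

Definition interlaced (n : nat) (w : {perm 'I_n}) (k : nat) : Prop :=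
  ~ incr_orient w k /\ ~ decr_orient w k.

From mathcomp Require Import all_boot all_fingroup zify.
Set Implicit Arguments. Unset Strict Implicit. Unset Printing Implicit Defensive.

(* The length of w is its number of inversions, and a letter a occurs in a reduced word
   of w exactly when w does not stabilise [1,a].  So the support hypotheses give some
   i <= k with w(i) > k and some j > k+1 with w(j) <= k+1.

   (a) If w([1,k]) is contained in [1,k+1], write w = U V with U permuting [1,k+1] and V
   fixing [1,k] pointwise.  Then V^-1 is increasing on [1,k+1], so lengths add and reduced
   words of U and V concatenate to one of w; the converse is immediate.  With i and j as
   above, w([1,k]) must then be [1,k+1] minus x = w(j), which is the stated condition.

   (c) In any word for w, a value w(i) > k+1 with i <= k forces a letter k+1 to the left of
   a letter k.  For reduced words the converse holds, by induction on the prefix before the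
   letter k+1, using the descent at the first letter.  Hence the increasing orientation is
   again w([1,k]) contained in [1,k+1].

   Reduced words of w^-1 are the reversed reduced words of w, which turns (b) and the
   decreasing orientation into the statements above for w^-1. *)

Lemma perm_closed_subset (T : finType) (p : {perm T}) (S : {set T}) :
  {in S, forall x, p x \in S} -> forall x, (p x \in S) = (x \in S).
Proof.
move=> pS x; have sub_pS : p @: S \subset S by apply/subsetP => _ /imsetP[y yS ->]; exact: pS.
have eq_pS : p @: S = S by apply/eqP; rewrite eqEcard sub_pS (card_imset _ (@perm_inj _ p)) /=.
by rewrite -{1}eq_pS (mem_imset _ _ (@perm_inj _ p)).
Qed.

Lemma imset_setU1_setD1P (T : finType) (f : {perm T}) (A : {set T}) (a i j : T) :
  a \notin A -> i \in A -> f i \notin A -> j \notin a |: A -> f j \in a |: A ->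
  f @: A \subset a |: A <->
  exists x, [/\ x \in A, f @: A = (a |: A) :\ x & (f^-1 x)%g \notin a |: A].
Proof.
move=> nAa Ai nAfi nBj Bfj; split=> [sub_fA | [x [_ -> _]]]; last exact: subsetDl.
have fi_a : f i = a.
  have := subsetP sub_fA _ (imset_f f Ai).
  by rewrite in_setU1 (negbTE nAfi) orbF => /eqP.
have nfj_a : f j != a.
  by rewrite -fi_a (inj_eq perm_inj); apply: contraNneq nBj => ->; rewrite in_setU1 Ai orbT.
have nAj y : y \in A -> y != j.
  by move=> Ay; apply: contraNneq nBj => <-; rewrite in_setU1 Ay orbT.
exists (f j); split; last by rewrite permK.
- by move: Bfj; rewrite in_setU1 (negbTE nfj_a).
- apply/eqP; rewrite eqEcard (card_imset _ (@perm_inj _ f)); apply/andP; split.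
    apply/subsetP => _ /imsetP[y Ay ->].
    by rewrite in_setD1 (inj_eq perm_inj) nAj // (subsetP sub_fA) // imset_f.
  by have := cardsD1 (f j) (a |: A); rewrite Bfj cardsU1 nAa; lia.
Qed.

Section Letters.
Variable n : nat.
Implicit Types (w p : {perm 'I_n}) (s u v : seq nat).

Lemma sigmaV a : (sigma n a)^-1%g = sigma n a.
Proof.
rewrite /sigma; case: (insub a.-1 : option 'I_n) => [i|]; last exact: invg1.
by case: (insub a : option 'I_n) => [j|]; rewrite ?tpermV ?invg1.
Qed.

Lemma sigma_adj (A0 A1 : 'I_n) : A1 = A0.+1 :> nat -> sigma n A1 = tperm A0 A1.
Proof.
move=> eA; have lt_A0n : A1.-1 < n by rewrite eA /= ltn_ord.
rewrite /sigma (insubT (fun i => i < n) lt_A0n) (insubT (fun i => i < n) (ltn_ord A1)).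
by congr tperm; apply: val_inj; rewrite /= eA.
Qed.

Lemma letter_adj a : 0 < a < n -> exists A0 A1 : 'I_n, a = A1 /\ A1 = A0.+1 :> nat.
Proof.
case/andP=> a_gt0 lt_an; have lt_a1n : a.-1 < n by rewrite (leq_ltn_trans (leq_pred a)).
by exists (Ordinal lt_a1n), (Ordinal lt_an); rewrite /= prednK.
Qed.

Lemma tperm_val (A0 A1 y : 'I_n) :
  tperm A0 A1 y = (if y == A0 :> nat then A1 else if y == A1 :> nat then A0 else y) :> nat.
Proof.
by case: tpermP => [->|->|/eqP nyA0 /eqP nyA1]; rewrite ?eqxx //;
  [case: eqP => [/val_inj ->|] | rewrite !val_eqE (negbTE nyA0) (negbTE nyA1)].
Qed.

Lemma sigma_ltn a m (y : 'I_n) : 0 < a < n -> a != m -> (sigma n a y < m) = (y < m).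
Proof.
move=> /letter_adj[A0 [A1 [-> eA]]] /eqP nAm; rewrite (sigma_adj eA) tperm_val.
by do 2?case: ifP => /eqP; lia.
Qed.

Lemma word_perm_cat u v : word_perm n (u ++ v) = (word_perm n v * word_perm n u)%g.
Proof. by elim: u => [|a u IHu] /=; rewrite ?mulg1 // IHu mulgA. Qed.

Lemma word_perm_rev s : word_perm n (rev s) = (word_perm n s)^-1%g.
Proof.
elim: s => [|a s IHs] /=; first by rewrite invg1.
by rewrite rev_cons -cats1 word_perm_cat IHs /= mul1g invMg sigmaV.
Qed.

Lemma word_perm_ltn s m (y : 'I_n) :
  valid_word n s -> m \notin s -> (word_perm n s y < m) = (y < m).
Proof.
elim: s => [|a s IHs] /=; first by rewrite perm1.
case/andP=> va vs; rewrite in_cons negb_or eq_sym => /andP[nam nms].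
by rewrite permM sigma_ltn // IHs.
Qed.

End Letters.

Section Inversions.
Variable n : nat.
Implicit Types (w p : {perm 'I_n}) (s u v : seq nat).

Definition ninv p : nat := \sum_(ij : 'I_n * 'I_n) ((ij.1 < ij.2) && (p ij.2 < p ij.1)).

Lemma ninv1 : ninv 1 = 0.
Proof. by apply: big1 => -[i j] _; rewrite !perm1 /=; case: ltngtP. Qed.

Lemma tperm_adj_ltn (A0 A1 x y : 'I_n) : A1 = A0.+1 :> nat ->
  (x, y) != (A0, A1) -> (x, y) != (A1, A0) ->
  (tperm A0 A1 x < tperm A0 A1 y) = (x < y).
Proof.
move=> eA; rewrite !xpair_eqE -!val_eqE !tperm_val /=.
by do 4?case: eqP; lia.
Qed.

Lemma ninv_mul_tperm p (A0 A1 : 'I_n) : A1 = A0.+1 :> nat ->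
  ninv (p * tperm A0 A1) + (p^-1 A1 < p^-1 A0)%g = ninv p + (p^-1 A0 < p^-1 A1)%g.
Proof.
move=> eA; set i0 := (p^-1 A0)%g; set i1 := (p^-1 A1)%g.
have ne_i01 : i0 != i1.
  by rewrite (inj_eq perm_inj); apply/eqP => /(congr1 (@nat_of_ord n)); lia.
have ne_pair : (i1, i0) != (i0, i1) by rewrite xpair_eqE eq_sym (negbTE ne_i01).
rewrite /ninv (bigD1 (i0, i1)) // (bigD1 (i1, i0)) //=.
rewrite [in RHS](bigD1 (i0, i1)) // [in RHS](bigD1 (i1, i0)) //=.
rewrite !permM !permKV tpermL tpermR.
have neq_swap (ij : 'I_n * 'I_n) x y :
    ij != (p^-1 y, p^-1 x)%g -> (p ij.2, p ij.1) != (x, y).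
  by case: ij => i j; apply: contraNneq => -[<- <-]; rewrite !permK.
under eq_bigr => ij /andP[ne_ij0 ne_ij1]
  do rewrite !permM (tperm_adj_ltn eA (neq_swap _ _ _ ne_ij1) (neq_swap _ _ _ ne_ij0)).
have lt_A01 : A0 < A1 by rewrite eA.
have /negbTE ngt_A10 : ~~ (A1 < A0) by rewrite -leqNgt ltnW.
by rewrite lt_A01 ngt_A10 !andbT !andbF; lia.
Qed.

Lemma ninv_mul_sigma_le p a : 0 < a < n -> ninv (p * sigma n a) <= (ninv p).+1.
Proof.
by case/letter_adj=> A0 [A1 [-> eA]]; rewrite (sigma_adj eA); have := ninv_mul_tperm p eA; lia.
Qed.

Lemma ninv_word_le s : valid_word n s -> ninv (word_perm n s) <= size s.
Proof.
elim: s => [|a s IHs] /=; first by rewrite ninv1.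
by case/andP=> va /IHs; have := ninv_mul_sigma_le (word_perm n s) va; lia.
Qed.

Lemma perm_adj_increasing_id (q : {perm 'I_n}) :
  (forall i j : 'I_n, j = i.+1 :> nat -> q i < q j) -> q = 1%g.
Proof.
move=> incr_q.
have le_q m (i : 'I_n) : i = m :> nat -> m <= q i.
  elim: m i => [|m IHm] i ei //.
  have lt_mn : m < n by have := ltn_ord i; lia.
  by have := incr_q (Ordinal lt_mn) i ei; have := IHm (Ordinal lt_mn) erefl; lia.
(* [i <= q i] everywhere, while both sides have the same sum. *)
have [_] := @leqif_sum 'I_n xpredT (fun i => i == q i :> nat) (fun i => val i) (fun i => val (q i))
  (fun i _ => leqif_eq (le_q i i erefl)).
have sum_q : \sum_(i : 'I_n) val (q i) = \sum_(i : 'I_n) val i := esym (reindex_inj perm_inj).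
rewrite sum_q eqxx => /esym/forallP eq_q.
by apply/permP => i; rewrite perm1; apply/val_inj/esym/eqP; exact: eq_q.
Qed.

Lemma exists_word_ninv p :
  exists s, [/\ valid_word n s, word_perm n s = p & size s = ninv p].
Proof.
have [m] := ubnP (ninv p); elim: m p => // m IHm p lt_pm.
case: (pickP [pred A : 'I_n * 'I_n | (A.2 == A.1.+1 :> nat) && (p^-1 A.2 < p^-1 A.1)%g]).
  move=> [A0 A1] /andP[/eqP eA desc]; have := ninv_mul_tperm p eA.
  rewrite desc ltnNge (ltnW desc) /= => ninv_pt.
  have [s [vs ws ss]] := IHm (p * tperm A0 A1)%g ltac:(lia).
  exists (nat_of_ord A1 :: s); split=> /=; last by lia.
  - by rewrite vs ltn_ord eA.
  - by rewrite ws (sigma_adj eA) -mulgA tperm2 mulg1.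
move=> no_desc; suff -> : p = 1%g by exists [::]; rewrite ninv1.
rewrite -[p]invgK (@perm_adj_increasing_id p^-1) ?invg1 // => i j eij.
have := no_desc (i, j); rewrite /= eij eqxx /= => /negbT; rewrite -leqNgt leq_eqVlt.
case/predU1P => [/val_inj/perm_inj eji|//].
by move: eij; rewrite eji; lia.
Qed.

Lemma reduced_wordP w s :
  reduced_word w s <-> [/\ valid_word n s, word_perm n s = w & size s = ninv w].
Proof.
split=> [[vs ws min_s] | [vs ws ss]].
  have [t [vt wt st]] := exists_word_ninv w.
  by split=> //; have := min_s t vt wt; have := ninv_word_le vs; rewrite ws; lia.
by split=> // t vt wt; rewrite ss -wt ninv_word_le.
Qed.

Lemma reduced_word_exists w : exists s, reduced_word w s.
Proof. by have [s ?] := exists_word_ninv w; exists s; apply/reduced_wordP. Qed.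

Lemma reduced_cons w a s : reduced_word w (a :: s) -> reduced_word (word_perm n s) s.
Proof.
case=> /= /andP[va vs] ws min_as; split=> // t vt wt.
by apply: (min_as (a :: t)); rewrite /= ?va ?vt // wt.
Qed.

Lemma reduced_word_rev w s : reduced_word w s -> reduced_word w^-1 (rev s).
Proof.
case=> vs ws min_s; split; rewrite ?/valid_word ?all_rev ?word_perm_rev ?ws // => t vt wt.
by rewrite size_rev -(size_rev t) min_s ?/valid_word ?all_rev // word_perm_rev wt invgK.
Qed.

Lemma reduced_cons_descent w s (A0 A1 : 'I_n) : A1 = A0.+1 :> nat ->
  reduced_word w (nat_of_ord A1 :: s) -> (w^-1 A1 < w^-1 A0)%g.
Proof.
move=> eA /reduced_wordP[/= /andP[_ vs] ws ss].
have wt : (w * tperm A0 A1)%g = word_perm n s.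
  by rewrite -ws (sigma_adj eA) -mulgA tperm2 mulg1.
by have := ninv_mul_tperm w eA; have := ninv_word_le vs; rewrite wt; lia.
Qed.

End Inversions.

Section Prefixes.
Variable n : nat.
Implicit Types (w p : {perm 'I_n}) (s u v : seq nat).

(* With 0-based positions, [maps_prefix w k k.+1] says w([1,k]) is contained in [1,k+1]. *)
Definition maps_prefix w (m r : nat) : bool := [forall i : 'I_n, (i < m) ==> (w i < r)].

Lemma maps_prefixPn w m r :
  reflect (exists2 i : 'I_n, i < m & r <= w i) (~~ maps_prefix w m r).
Proof.
rewrite negb_forall; apply: (iffP existsP) => [[i] | [i lt_im le_rwi]].
  by rewrite negb_imply -leqNgt => /andP[]; exists i.
by exists i; rewrite negb_imply lt_im -leqNgt.
Qed.

Lemma maps_prefixV w m : maps_prefix w^-1 m m = maps_prefix w m m.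
Proof.
suff stableV p : maps_prefix p m m -> maps_prefix p^-1 m m.
  by apply/idP/idP => /stableV; rewrite ?invgK.
move=> /forallP stable_p.
have closed_p : {in [set i : 'I_n | i < m], forall y, p y \in [set i : 'I_n | i < m]}.
  by move=> y; rewrite !inE; exact/implyP.
have mem_p x : (p x < m) = (x < m) by have := perm_closed_subset closed_p x; rewrite !inE.
by apply/forallP => v; rewrite -(mem_p (p^-1 v)%g) permKV; exact/implyP.
Qed.

Lemma maps_prefixPn_inv w m :
  reflect (exists2 j : 'I_n, m <= j & w j < m) (~~ maps_prefix w m m).
Proof.
rewrite -maps_prefixV; apply: (iffP (maps_prefixPn w^-1 m m)) => [[v lt_vm le] | [j le lt]].
  by exists (w^-1 v)%g; rewrite ?permKV.
by exists (w j); rewrite ?permK.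
Qed.

Lemma mem_reduced_maps_prefixN w s a : reduced_word w s -> a \in s -> ~~ maps_prefix w a a.
Proof.
elim: s w => // b s IHs w r; have [/= /andP[vb _] ws _] := r.
rewrite in_cons; case: eqVneq => [eab _ | nab /= a_s].
  have [A0 [A1 [eA1 eA]]] := letter_adj vb; rewrite eab eA1 in r *.
  have desc := reduced_cons_descent eA r.
  case: (ltnP (w^-1 A1)%g A1) => [lt_A1 | le_A1].
    by apply/maps_prefixPn; exists (w^-1 A1)%g; rewrite ?permKV.
  by apply/maps_prefixPn_inv; exists (w^-1 A0)%g; rewrite ?permKV ?eA //; lia.
have /maps_prefixPn[i lt_ia le_a] := IHs _ (reduced_cons r) a_s.
apply/maps_prefixPn; exists i => //.
by rewrite -ws /= permM leqNgt sigma_ltn 1?eq_sym // -leqNgt.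
Qed.

Lemma maps_prefix_imageP w k (i0 j0 : 'I_n) :
  i0 < k -> k <= w i0 -> k < j0 -> w j0 <= k ->
  maps_prefix w k k.+1 <->
  exists x : 'I_n, x < k /\ [set w i | i : 'I_n & i < k] = [set v : 'I_n | v < k.+1] :\ x
                   /\ k < (w^-1 x)%g.
Proof.
move=> lt_i0k le_k_wi0 lt_kj0 le_wj0k; have lt_kn : k < n := ltn_trans lt_kj0 (ltn_ord j0).
set K := Ordinal lt_kn; set A := [set i : 'I_n | i < k].
have eB : [set v : 'I_n | v < k.+1] = K |: A.
  by apply/setP => v; rewrite !inE -val_eqE ltnS leq_eqVlt.
have nAK : K \notin A by rewrite inE ltnn.
have Ai0 : i0 \in A by rewrite inE.
have nAwi0 : w i0 \notin A by rewrite inE -leqNgt.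
have nBj0 : j0 \notin K |: A by rewrite in_setU1 inE -val_eqE /=; lia.
have Bwj0 : w j0 \in K |: A by rewrite in_setU1 inE -val_eqE /=; lia.
rewrite eB; split=> [mp | [x [_ [eq_img _]]]].
  have [|x [Ax eq_img nBx]] := (imset_setU1_setD1P nAK Ai0 nAwi0 nBj0 Bwj0).1.
    apply/subsetP => _ /imsetP[i Ai ->]; rewrite -eB inE.
    by move: Ai; rewrite inE; apply/implyP; move/forallP: mp.
  exists x; move: Ax nBx; rewrite in_setU1 !inE -val_eqE /= negb_or -leqNgt.
  by move=> lt_xk /andP[nxk le_kx]; do !split=> //; rewrite ltn_neqAle eq_sym nxk.
apply/forallP => i; apply/implyP => lt_ik.
have : w i \in [set w i | i : 'I_n & i < k] by apply: imset_f; rewrite inE.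
by rewrite eq_img in_setD1 -eB inE => /andP[_].
Qed.

Lemma maps_prefixV_imageP w k (i0 j0 : 'I_n) :
  i0 < k -> k <= w i0 -> k < j0 -> w j0 <= k ->
  maps_prefix w^-1 k k.+1 <->
  exists y : 'I_n, k < y /\ [set w i | i : 'I_n & k < i] = [set v : 'I_n | k <= v] :\ y
                   /\ (w^-1 y)%g < k.
Proof.
move=> lt_i0k le_k_wi0 lt_kj0 le_wj0k; have lt_kn : k < n := ltn_trans lt_kj0 (ltn_ord j0).
set K := Ordinal lt_kn; set A := [set i : 'I_n | k < i].
have eB : [set v : 'I_n | k <= v] = K |: A.
  by apply/setP => v; rewrite !inE -val_eqE leq_eqVlt eq_sym.
have nAK : K \notin A by rewrite inE ltnn.
have Aj0 : j0 \in A by rewrite inE.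
have nAwj0 : w j0 \notin A by rewrite inE -leqNgt.
have nBi0 : i0 \notin K |: A by rewrite in_setU1 inE -val_eqE /=; lia.
have Bwi0 : w i0 \in K |: A by rewrite in_setU1 inE -val_eqE /=; lia.
rewrite eB; split=> [mp | [y [_ [eq_img _]]]].
  have [|y [Ay eq_img nBy]] := (imset_setU1_setD1P nAK Aj0 nAwj0 nBi0 Bwi0).1.
    apply/subsetP => _ /imsetP[i Ai ->]; rewrite -eB inE leqNgt; apply/negP => lt_wik.
    by move/forallP/(_ (w i)): mp; rewrite lt_wik permK; move: Ai; rewrite inE; lia.
  exists y; move: Ay nBy; rewrite in_setU1 !inE -val_eqE /= negb_or -leqNgt.
  by move=> lt_ky /andP[nyk le_yk]; do !split=> //; rewrite ltn_neqAle nyk.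
apply/forallP => v; apply/implyP => lt_vk; rewrite ltnS leqNgt; apply/negP => lt_k_wv.
have : w (w^-1 v)%g \in [set w i | i : 'I_n & k < i] by apply: imset_f; rewrite inE.
by rewrite eq_img permKV in_setD1 -eB inE leqNgt lt_vk andbF.
Qed.

End Prefixes.

Section Factorizations.
Variable n : nat.
Implicit Types (w p : {perm 'I_n}) (s u v : seq nat).

Definition factors_low_high w k : Prop :=
  exists u v, reduced_word w (u ++ v) /\ all (fun a => a <= k) u /\ all (fun a => k.+1 <= a) v.

Definition factors_high_low w k : Prop :=
  exists u v, reduced_word w (u ++ v) /\ all (fun a => k.+1 <= a) u /\ all (fun a => a <= k) v.

Lemma factors_high_lowV w k : factors_high_low w k <-> factors_low_high w^-1 k.
Proof.
have rev_split w' u v : reduced_word w' (u ++ v) -> reduced_word w'^-1 (rev v ++ rev u).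
  by move/reduced_word_rev; rewrite rev_cat.
split=> -[u [v [r [hu hv]]]]; exists (rev v), (rev u); rewrite !all_rev; split=> //.
  exact: rev_split.
by rewrite -[w]invgK; apply: rev_split.
Qed.

Lemma ninv_mul_low_word (U V : {perm 'I_n}) u m :
  reduced_word U u -> all (fun a => a < m) u ->
  (forall p q : 'I_n, p < q -> q < m -> V^-1 p < V^-1 q)%g ->
  ninv (V * U) = size u + ninv V.
Proof.
elim: u U => [|a u IHu] U r /=; first by case: r => _ <- _; rewrite mulg1.
case/andP=> lt_am low_u incr_V.
have [/= /andP[va vu] wU _] := r.
have [A0 [A1 [ea eA]]] := letter_adj va; rewrite ea in r wU lt_am.
set U' := word_perm n u; have rU' : reduced_word U' u := reduced_cons r.
have asc : (U'^-1 A0 < U'^-1 A1)%g.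
  have := reduced_cons_descent eA r.
  by rewrite -wU (sigma_adj eA) invMg tpermV !permM tpermL tpermR.
have low_U' x : (U'^-1 x < m)%g = (x < m).
  by rewrite -[in RHS](permKV U' x) word_perm_ltn //; apply/negP => /(allP low_u); rewrite ltnn.
have lt_V : (V^-1 (U'^-1 A0) < V^-1 (U'^-1 A1))%g by rewrite incr_V ?low_U'.
have /negbTE ngt_V : ~~ (V^-1 (U'^-1 A1) < V^-1 (U'^-1 A0))%g by rewrite -leqNgt ltnW.
have := ninv_mul_tperm (V * U') eA; rewrite invMg !permM lt_V ngt_V.
by rewrite -wU /= -/U' (sigma_adj eA) mulgA (IHu U') //= addn0 addn1 => ->.
Qed.

Lemma factors_low_high_maps_prefix w k : factors_low_high w k -> maps_prefix w k k.+1.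
Proof.
case=> u [v [[vuv <- _] [low_u high_v]]].
move: vuv; rewrite /valid_word all_cat => /andP[vu vv].
apply/forallP => i; apply/implyP => lt_ik; rewrite word_perm_cat permM word_perm_ltn //.
  rewrite ltnS; apply: ltnW; rewrite word_perm_ltn //.
  by apply/negP => /(allP high_v); rewrite ltnn.
by apply/negP => /(allP low_u); rewrite ltnn.
Qed.

Lemma maps_prefix_decomposition w k : k < n -> maps_prefix w k k.+1 ->
  exists U V : {perm 'I_n}, [/\ w = (V * U)%g, perm_on [set i : 'I_n | i <= k] U
                              & forall i : 'I_n, i < k -> V i = i].
Proof.
move=> lt_kn /forallP into_w; set K := Ordinal lt_kn; set S := [set i : 'I_n | i <= k].
have [j le_kj le_wjk] : exists2 j : 'I_n, k <= j & w j <= k.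
  case: (leqP (w K) k) => [le_wK | lt_wK]; first by exists K.
  have /maps_prefixPn_inv[j le_k1j lt_wj] : ~~ maps_prefix w k.+1 k.+1.
    by apply/maps_prefixPn; exists K.
  by exists j; first exact: ltnW.
(* Swapping positions [j] and [k] makes [w] stabilise [0, k]. *)
pose w' := (tperm j K * w)%g.
have w'_low (i : 'I_n) : i < k -> w' i = w i.
  by move=> lt_ik; rewrite permM tpermD // -val_eqE /= neq_ltn ?lt_ik ?(leq_trans lt_ik) ?orbT.
have w'S : w' \in ('N(S | 'P))%g.
  apply/astabsP; apply: perm_closed_subset => x; rewrite !inE => le_xk.
  case: (ltnP x k) => [lt_xk | le_kx]; first by rewrite w'_low // -ltnS (implyP (into_w x)).
  have -> : x = K by apply/val_inj/eqP; rewrite /= eqn_leq le_xk le_kx.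
  by rewrite permM tpermR.
pose U := restr_perm S w'; exists U, (w * U^-1)%g; split.
- by rewrite -mulgA mulVg mulg1.
- exact: restr_perm_on.
- move=> i lt_ik; rewrite permM; apply: (canLR (permK U)).
  by rewrite restr_permE ?w'_low // inE (ltnW lt_ik).
Qed.

Lemma factors_low_high_mul (U V : {perm 'I_n}) k :
  perm_on [set i : 'I_n | i <= k] U -> (forall i : 'I_n, i < k -> V i = i) ->
  factors_low_high (V * U) k.
Proof.
move=> U_on V_low.
have [u ru] := reduced_word_exists U; have [v rv] := reduced_word_exists V.
have low_u : all (fun a => a <= k) u.
  apply/allP => a a_u; rewrite leqNgt; apply: contra (mem_reduced_maps_prefixN ru a_u) => lt_ka.
  apply/forallP => i; apply/implyP => lt_ia.
  case: (boolP (i \in [set i : 'I_n | i <= k])) => [i_S | i_nS]; last by rewrite (out_perm U_on).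
  by move: i_S; rewrite -(perm_closed _ U_on) inE => /leq_ltn_trans; apply.
have high_v : all (fun a => k.+1 <= a) v.
  apply/allP => a a_v; rewrite ltnNge; apply: contra (mem_reduced_maps_prefixN rv a_v) => le_ak.
  by apply/forallP => i; apply/implyP => lt_ia; rewrite V_low // (leq_trans lt_ia).
have V_incr (p q : 'I_n) : p < q -> q < k.+1 -> (V^-1 p < V^-1 q)%g.
  move=> lt_pq le_qk; have lt_pk : p < k := leq_trans lt_pq le_qk.
  rewrite -{1}(V_low p lt_pk) permK.
  case: (ltnP q k) => [lt_qk | le_kq]; first by rewrite -{1}(V_low q lt_qk) permK.
  rewrite (leq_trans lt_pk) // leqNgt; apply/negP => /[dup] lt_Vq /V_low.
  by rewrite permKV => eq_q; move: lt_Vq; rewrite -eq_q ltnNge le_kq.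
have /reduced_wordP[vu wu _] := ru; have /reduced_wordP[vv wv sv] := rv.
exists u, v; split=> //; apply/reduced_wordP; split.
- by rewrite /valid_word all_cat; apply/andP.
- by rewrite word_perm_cat wu wv.
- by rewrite size_cat (ninv_mul_low_word (m := k.+1) ru low_u V_incr) sv.
Qed.

Lemma factors_low_highP w k : k < n -> factors_low_high w k <-> maps_prefix w k k.+1.
Proof.
move=> lt_kn; split; first exact: factors_low_high_maps_prefix.
by case/(maps_prefix_decomposition lt_kn) => U [V [-> U_on V_low]]; apply: factors_low_high_mul.
Qed.

End Factorizations.

Definition occurs_before (c d : nat) (s : seq nat) : Prop :=
  exists s1 s2, s = s1 ++ c :: s2 /\ d \in s2.

Lemma occurs_beforeP c d s : c != d ->
  ~ occurs_before c d s <->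
  (forall i j, i < size s -> j < size s -> nth 0 s i = d -> nth 0 s j = c -> i < j).
Proof.
move=> ncd; split=> [no_occ i j lt_i lt_j si sj | before [s1 [s2 [def_s ds2]]]].
  rewrite ltnNge leq_eqVlt; apply/negP => /orP[/eqP eji | lt_ji].
    by move: ncd; rewrite -si -sj eji eqxx.
  apply: no_occ; exists (take j s), (drop j.+1 s).
  split; first by rewrite -sj -drop_nth ?cat_take_drop.
  rewrite -si -(subnKC lt_ji) -nth_drop mem_nth // size_drop.
  by rewrite ltn_sub2r // (leq_ltn_trans lt_ji lt_i).
subst s; have ds1c : nth 0 (s1 ++ c :: s2) (size s1 + (index d s2).+1) = d.
  by rewrite nth_cat ltnNge leq_addr addKn /= nth_index.
have lt_j : size s1 < size (s1 ++ c :: s2) by rewrite size_cat /= addnS ltnS leq_addr.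
have lt_i : size s1 + (index d s2).+1 < size (s1 ++ c :: s2).
  by rewrite size_cat ltn_add2l /= ltnS index_mem.
by have := before _ _ lt_i lt_j ds1c; rewrite nth_cat ltnn subnn ltnNge leq_addr => /(_ erefl).
Qed.

Lemma occurs_before_rev c d s : occurs_before c d s -> occurs_before d c (rev s).
Proof.
case=> s1 [s2 [-> ds2]]; rewrite rev_cat rev_cons cat_rcons.
move: ds2; rewrite -mem_rev => /splitPr[t1 t2].
by exists t1, (t2 ++ c :: rev s1); rewrite -catA mem_cat mem_head orbT.
Qed.

Section Orientation.
Variable n : nat.
Implicit Types (w p : {perm 'I_n}) (s u v : seq nat).

Lemma maps_prefixN_occurs_before s k :
  valid_word n s -> ~~ maps_prefix (word_perm n s) k k.+1 -> occurs_before k.+1 k s.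
Proof.
elim: s => [|a s IHs] /=; first by move=> _ /maps_prefixPn[i lt_ik]; rewrite perm1; lia.
case/andP=> va vs /maps_prefixPn[i lt_ik]; rewrite permM.
case: (leqP k.+1 (word_perm n s i)) => [le_k1_si _ | lt_si_k1 le_k1].
  have [|s1 [s2 [-> ks2]]] := IHs vs; first by apply/maps_prefixPn; exists i.
  by exists (a :: s1), s2.
have ea : a = k.+1.
  by apply/eqP; apply: contraLR le_k1 => nak; rewrite -ltnNge sigma_ltn.
subst a; case: (boolP (k \in s)) => [ks | nks]; first by exists [::], s.
have : sigma n k.+1 (word_perm n s i) < k by rewrite sigma_ltn ?word_perm_ltn // gtn_eqF.
by move: le_k1; lia.
Qed.

Lemma reduced_cons_maps_prefixN w s k :
  reduced_word w (k.+1 :: s) -> k \in s -> ~~ maps_prefix w k k.+1.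
Proof.
move=> r ks; have [/andP[vk _] ws _] := r.
have [A0 [A1 [eA1 eA]]] := letter_adj vk; rewrite eA1 in r ws.
have desc := reduced_cons_descent eA r.
have /maps_prefixPn[i lt_ik le_k_si] := mem_reduced_maps_prefixN (reduced_cons r) ks.
have wi : w i = tperm A0 A1 (word_perm n s i) by rewrite -ws /= permM (sigma_adj eA).
apply/maps_prefixPn; case: (eqVneq (word_perm n s i) A1) => [si_A1 | nsi_A1].
  have wi_A0 : (w^-1 A0)%g = i by apply: (canLR (permK w)); rewrite wi si_A1 tpermR.
  exists (w^-1 A1)%g; last by rewrite permKV -eA1.
  by rewrite wi_A0 in desc; lia.
exists i => //; have := tperm_val A0 A1 (word_perm n s i); rewrite -wi.
by move: nsi_A1; rewrite -val_eqE /=; do 2?case: ifP => /eqP; lia.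
Qed.

Lemma occurs_before_maps_prefixN w s k :
  reduced_word w s -> occurs_before k.+1 k s -> ~~ maps_prefix w k k.+1.
Proof.
move=> r [s1 [s2 [def_s ks2]]]; subst s; elim: s1 w r => [|b s1 IHs1] w r /=.
  exact: reduced_cons_maps_prefixN r ks2.
case: (eqVneq b k.+1) => [eb | nb].
  by subst b; apply: reduced_cons_maps_prefixN r _; rewrite mem_cat in_cons ks2 !orbT.
have /maps_prefixPn[i lt_ik le_k1] := IHs1 _ (reduced_cons r).
have [/andP[vb _] <- _] := r; apply/maps_prefixPn; exists i => //.
by rewrite /= permM leqNgt sigma_ltn // -leqNgt.
Qed.

Lemma incr_orient_occurs w k :
  incr_orient w k <-> forall s, reduced_word w s -> ~ occurs_before k.+1 k s.
Proof.
have nk : k.+1 != k by rewrite gtn_eqF.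
by split=> orient s r; [apply/(occurs_beforeP _ nk) | apply/(occurs_beforeP _ nk)]; apply: orient.
Qed.

Lemma decr_orient_occurs w k :
  decr_orient w k <-> forall s, reduced_word w s -> ~ occurs_before k k.+1 s.
Proof.
have nk : k != k.+1 by rewrite ltn_eqF.
split=> orient s r.
  by apply/(occurs_beforeP _ nk) => i j lt_i lt_j si sj; apply: orient sj si.
by move=> i j lt_i lt_j si sj; apply: (occurs_beforeP _ nk).1 (orient s r) _ _ lt_j lt_i sj si.
Qed.

Lemma incr_orientP w k : incr_orient w k <-> maps_prefix w k k.+1.
Proof.
rewrite incr_orient_occurs; split=> [no_occ | into_w s r /(occurs_before_maps_prefixN r)].
  apply: contraT => cross; have [s r] := reduced_word_exists w; have [vs ws _] := r.
  by case: (no_occ s r); apply: maps_prefixN_occurs_before; rewrite ?ws.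
by rewrite into_w.
Qed.

Lemma decr_orientP w k : decr_orient w k <-> maps_prefix w^-1 k k.+1.
Proof.
rewrite -incr_orientP decr_orient_occurs incr_orient_occurs.
split=> no_occ s r /occurs_before_rev; apply: no_occ; last exact: reduced_word_rev.
by rewrite -[w]invgK; apply: reduced_word_rev.
Qed.

End Orientation.

Theorem theorem3p11 (n : nat) (w : {perm 'I_n}) (k : nat) :
  in_supp w k -> in_supp w k.+1 ->
  (* (a) *)
  ((exists u v, reduced_word w (u ++ v) /\
       all (fun a => a <= k) u /\ all (fun a => k.+1 <= a) v)
   <->
   (exists x : 'I_n, x.+1 < k.+1 /\
       [set w i | i : 'I_n & i.+1 <= k] = [set v : 'I_n | v.+1 <= k.+1] :\ x /\
       k.+1 < ((w^-1)%g x).+1))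
  /\
  (* (b) *)
  ((exists u v, reduced_word w (u ++ v) /\
       all (fun a => k.+1 <= a) u /\ all (fun a => a <= k) v)
   <->
   (exists y : 'I_n, k.+1 < y.+1 /\
       [set w i | i : 'I_n & k.+2 <= i.+1] = [set v : 'I_n | k.+1 <= v.+1] :\ y /\
       ((w^-1)%g y).+1 < k.+1))
  /\
  (* (c) *)
  (interlaced w k <->
   (exists i j : 'I_n, 1 <= i.+1 <= k /\ k.+2 <= j.+1 <= n /\
       k.+1 < (w i).+1 /\ (w j).+1 < k.+1)).
Proof.
move=> [s0 [r0 k_s0]] [s1 [r1 k1_s1]].
have /maps_prefixPn[i0 lt_i0k le_k_wi0] := mem_reduced_maps_prefixN r0 k_s0.
have /maps_prefixPn_inv[j0 lt_kj0 le_wj0k] := mem_reduced_maps_prefixN r1 k1_s1.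
have lt_kn : k < n := ltn_trans lt_kj0 (ltn_ord j0).
split; [|split].
- apply: iff_trans (factors_low_highP w lt_kn) _.
  exact: maps_prefix_imageP lt_i0k le_k_wi0 lt_kj0 le_wj0k.
- apply: iff_trans (factors_high_lowV w k) (iff_trans (factors_low_highP _ lt_kn) _).
  exact: maps_prefixV_imageP lt_i0k le_k_wi0 lt_kj0 le_wj0k.
- rewrite /interlaced incr_orientP decr_orientP.
  split=> [[/negP/maps_prefixPn[i lt_ik le_k1_wi] /negP/maps_prefixPn[v lt_vk le_k1_wv]] |
           [i [j [/andP[_ lt_ik] [/andP[lt_kj _] [lt_k_wi lt_wj_k]]]]]].
    by exists i, (w^-1 v)%g; rewrite permKV; have := ltn_ord (w^-1 v)%g; lia.
  by split; apply/negP/maps_prefixPn; [exists i | exists (w j); rewrite ?permK].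
Qed.
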